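(* Let $p>1$ and let $s,q,V:\mathbb{R}^3\to(0,\infty)$ be radially symmetric $C^2$-functions with one-dimensional representatives $\tilde s,\tilde q,\tilde V$. Let $\psi:[0,\infty)\times\mathbb{R}\to\mathbb{R}$ be a $C^2$-function with $\psi(0,t)=\psi''(0,t)=0$ for all $t$, where $'$ denotes $\partial/\partial r$. Then $U(x,t):=\psi(|x|,t)\frac{x}{|x|}$ (extended to $x=0$) is a $C^2(\mathbb{R}^3\times\mathbb{R})$ function, and it solves $$s(x)\partial_t^2U+\nabla\times\nabla\times U+q(x)U\pm V(x)|U|^{p-1}U=0\quad\text{on }\mathbb{R}^3\times\mathbb{R}$$ if and only if $\psi$ satisfies $$\tilde s(r)\ddot\psi+\tilde q(r)\psi\pm\tilde V(r)|\psi|^{p-1}\psi=0\quad\text{for }r\ge0,\ t\in\mathbb{R},$$ with the same choice of sign in both equations, where $\dot{}$ denotes $\partial/\partial t$.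
   Context: For a radially symmetric $C^2$-function $f:\mathbb{R}^3\to\mathbb{R}$, its one-dimensional representative $\tilde f:[0,\infty)\to\mathbb{R}$ is defined by $\tilde f(|x|)=f(x)$; it satisfies $\tilde f\in C^2([0,\infty))$, $\tilde f'(0)=0$. *)

From Stdlib Require Import Reals Lra List.
From Coquelicot Require Import Coquelicot.
Import ListNotations.
Open Scope R_scope.

Definition R3 : Type := (R * R * R)%type.
Definition c1 (x : R3) : R := fst (fst x).
Definition c2 (x : R3) : R := snd (fst x).
Definition c3 (x : R3) : R := snd x.

Definition norm3 (x : R3) : R := sqrt (c1 x ^ 2 + c2 x ^ 2 + c3 x ^ 2).

Definition dirD {V : NormedModule R_AbsRing} (f : V -> R) (v : V) (x : V) : R :=
  Derive (fun h : R => f (plus x (scal h v))) 0.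
Definition dir_ex {V : NormedModule R_AbsRing} (f : V -> R) (v : V) (x : V) : Prop :=
  ex_derive (fun h : R => f (plus x (scal h v))) 0.

Definition C2 {V : NormedModule R_AbsRing} (B : list V) (f : V -> R) : Prop :=
  (forall x, continuous f x) /\
  (forall v, In v B ->
     (forall x, dir_ex f v x) /\ (forall x, continuous (dirD f v) x)) /\
  (forall v w, In v B -> In w B ->
     (forall x, dir_ex (dirD f v) w x) /\
     (forall x, continuous (dirD (dirD f v) w) x)).

Definition B3 : list (R * R * R) := [(1, 0, 0); (0, 1, 0); (0, 0, 1)].
Definition B4 : list (R * R * R * R) :=
  [(1, 0, 0, 0); (0, 1, 0, 0); (0, 0, 1, 0); (0, 0, 0, 1)].

Definition VF : Type := R3 -> R -> R3.
Definition F1 (F : VF) : R3 -> R -> R := fun x t => c1 (F x t).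
Definition F2 (F : VF) : R3 -> R -> R := fun x t => c2 (F x t).
Definition F3 (F : VF) : R3 -> R -> R := fun x t => c3 (F x t).

Definition px1 (g : R3 -> R -> R) (x : R3) (t : R) : R :=
  Derive (fun y => g (y, c2 x, c3 x) t) (c1 x).
Definition px2 (g : R3 -> R -> R) (x : R3) (t : R) : R :=
  Derive (fun y => g (c1 x, y, c3 x) t) (c2 x).
Definition px3 (g : R3 -> R -> R) (x : R3) (t : R) : R :=
  Derive (fun y => g (c1 x, c2 x, y) t) (c3 x).
Definition ptt (g : R3 -> R -> R) (x : R3) (t : R) : R :=
  Derive (fun s => Derive (fun u => g x u) s) t.

Definition curl (F : VF) : VF := fun x t =>
  (px2 (F3 F) x t - px3 (F2 F) x t,
   px3 (F1 F) x t - px1 (F3 F) x t,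
   px1 (F2 F) x t - px2 (F1 F) x t).

Definition dtt (F : VF) : VF := fun x t =>
  (ptt (F1 F) x t, ptt (F2 F) x t, ptt (F3 F) x t).

Definition C2_VF (U : VF) : Prop :=
  C2 B4 (fun z : R * R * R * R => c1 (U (fst z) (snd z))) /\
  C2 B4 (fun z : R * R * R * R => c2 (U (fst z) (snd z))) /\
  C2 B4 (fun z : R * R * R * R => c3 (U (fst z) (snd z))).

(** a^b for a >= 0 (with 0^b := 0, as appropriate for b > 0). *)
Definition rpow (a b : R) : R := if Rlt_dec 0 a then Rpower a b else 0.

Definition radial_field (psi : R -> R -> R) : VF := fun x t =>
  if Req_EM_T (norm3 x) 0 then (0, 0, 0)
  else let k := psi (norm3 x) t / norm3 x in (k * c1 x, k * c2 x, k * c3 x).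

(** s d_t^2 U + curl curl U + q U + sigma V |U|^(p-1) U = 0 on R^3 x R,
    sigma = +1 or -1 encodes the sign choice. *)
Definition solves_pde (s q V : R3 -> R) (p sigma : R) (U : VF) : Prop :=
  forall x t,
    let a := dtt U x t in
    let b := curl (curl U) x t in
    let u := U x t in
    let k := sigma * V x * rpow (norm3 u) (p - 1) in
    s x * c1 a + c1 b + q x * c1 u + k * c1 u = 0 /\
    s x * c2 a + c2 b + q x * c2 u + k * c2 u = 0 /\
    s x * c3 a + c3 b + q x * c3 u + k * c3 u = 0.

Definition dr (f : R -> R -> R) : R -> R -> R := fun r t => Derive (fun y => f y t) r.
Definition dt (f : R -> R -> R) : R -> R -> R := fun r t => Derive (fun s => f r s) t.
Definition uncurry (f : R -> R -> R) : R * R -> R := fun z => f (fst z) (snd z).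

Definition solves_ode (st qt Vt : R -> R) (p sigma : R) (psi : R -> R -> R) : Prop :=
  forall r t, 0 <= r ->
    st r * dt (dt psi) r t + qt r * psi r t
    + sigma * Vt r * (rpow (Rabs (psi r t)) (p - 1) * psi r t) = 0.

Definition derivs2 (f : R -> R -> R) : list (R -> R -> R) :=
  [f; dr f; dt f; dr (dr f); dt (dr f); dr (dt f); dt (dt f)].

(** psi in C^2([0,oo) x R), in the sense of C^2(closure Omega):
    psi is C^2 on the open half-plane r > 0, all its partial derivatives of
    order <= 2 extend continuously to r = 0, and psi itself is continuous
    on the closed half-plane. Values of psi at r < 0 are irrelevant. *)
Definition C2_halfplane (f : R -> R -> R) : Prop :=
  (forall r t, 0 < r ->
     ex_derive (fun y => f y t) r /\ ex_derive (fun s => f r s) t /\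
     ex_derive (fun y => dr f y t) r /\ ex_derive (fun s => dr f r s) t /\
     ex_derive (fun y => dt f y t) r /\ ex_derive (fun s => dt f r s) t) /\
  (forall g, In g (derivs2 f) -> forall r t, 0 < r -> continuous (uncurry g) (r, t)) /\
  (forall g, In g (derivs2 f) -> forall t, exists l : R,
     filterlim (uncurry g) (within (fun z : R * R => 0 < fst z) (locally (0, t)))
       (locally l)) /\
  (forall t, filterlim (uncurry f) (within (fun z : R * R => 0 <= fst z) (locally (0, t)))
       (locally (f 0 t))).

(* Off the axis, U = psi(|x|,t) x/|x| is the x-gradient of the primitive of psi(., t) evaluated
   at |x|, so curl U = 0; moreover |U| = |psi| and d_t^2 U = psi_tt x/|x|. Hence the i-th component
   of the PDE is x_i/|x| times the ODE at r = |x|, and on the axis both vanish since psi(0, .) = 0.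

   For the regularity across the axis, write the components as W(|x|,t) x_i with W = psi/r. Their
   x-derivatives are A x_i x_j + delta_ij W with A = W_r/r, and the second ones are combinations of
   (A_r/r) x_i x_j x_k, A x_i and W_t, A_t, ... times monomials. A coefficient multiplying a monomial
   of degree k only needs r^k times it to tend to 0 at the axis (or, for k = 0, to have a limit);
   the mean value theorem with psi(0,t) = 0 and psi_rr(0,t) = 0 gives W -> psi_r(0,t), r A -> 0
   and r^2 A_r -> 0, and t-derivatives of these limits are handled the same way. *)

From Stdlib Require Import Reals List Lra Psatz FunctionalExtensionality ClassicalEpsilon.
From Coquelicot Require Import Coquelicot.
Import ListNotations.
Open Scope R_scope.

(** * Limits at the axis r = 0 *)

Definition lim_r0 (g : R -> R -> R) (t0 l : R) : Prop :=
  forall eps : posreal, exists d : posreal, forall u v,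
    0 < u < d -> Rabs (v - t0) < d -> Rabs (g u v - l) < eps.

Lemma lim_r0_of_filterlim (D : R * R -> Prop) g t0 l :
  (forall z, 0 < fst z -> D z) ->
  filterlim (uncurry g) (within D (locally (0, t0))) (locally l) -> lim_r0 g t0 l.
Proof.
  intros HD H eps.
  destruct (H (fun y => Rabs (y - l) < eps)) as [d Hd]; [now exists eps|].
  exists d; intros u v Hu Hv.
  apply (Hd (u, v)); [split; simpl | apply HD; simpl; lra].
  - change (Rabs (u - 0) < d). rewrite Rminus_0_r, Rabs_pos_eq; lra.
  - exact Hv.
Qed.

Lemma lim_r0_comp2 (f g h : R -> R -> R) t0 l1 l2 :
  lim_r0 f t0 l1 -> lim_r0 g t0 l2 -> continuity_2d_pt h l1 l2 ->
  lim_r0 (fun u v => h (f u v) (g u v)) t0 (h l1 l2).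
Proof.
  intros Hf Hg Hh eps. destruct (Hh eps) as [d Hd].
  destruct (Hf d) as [d1 H1], (Hg d) as [d2 H2].
  assert (Hm : 0 < Rmin d1 d2) by (apply Rmin_pos; apply cond_pos).
  exists (mkposreal _ Hm); simpl; intros u v Hu Hv.
  pose proof (Rmin_l d1 d2); pose proof (Rmin_r d1 d2).
  apply Hd; [apply H1 | apply H2]; lra.
Qed.

Lemma lim_r0_ext (f g : R -> R -> R) t0 l :
  (forall u v, 0 < u -> f u v = g u v) -> lim_r0 f t0 l -> lim_r0 g t0 l.
Proof.
  intros E H eps. destruct (H eps) as [d Hd]. exists d. intros u v Hu Hv.
  rewrite <- E by lra. auto.
Qed.

Lemma lim_r0_const c t0 : lim_r0 (fun _ _ => c) t0 c.
Proof. intros eps. exists eps. intros. rewrite Rminus_eq_0, Rabs_R0. apply cond_pos. Qed.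

Lemma lim_r0_fst t0 : lim_r0 (fun u _ => u) t0 0.
Proof. intros eps. exists eps. intros u v Hu Hv. rewrite Rminus_0_r, Rabs_pos_eq; lra. Qed.

Lemma lim_r0_minus f g t0 l1 l2 : lim_r0 f t0 l1 -> lim_r0 g t0 l2 ->
  lim_r0 (fun u v => f u v - g u v) t0 (l1 - l2).
Proof.
  intros. apply (lim_r0_comp2 f g (fun a b => a - b)); auto.
  apply continuity_2d_pt_minus; [apply continuity_2d_pt_id1 | apply continuity_2d_pt_id2].
Qed.

Lemma lim_r0_mult f g t0 l1 l2 : lim_r0 f t0 l1 -> lim_r0 g t0 l2 ->
  lim_r0 (fun u v => f u v * g u v) t0 (l1 * l2).
Proof.
  intros. apply (lim_r0_comp2 f g (fun a b => a * b)); auto.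
  apply continuity_2d_pt_mult; [apply continuity_2d_pt_id1 | apply continuity_2d_pt_id2].
Qed.

Lemma lim_r0_scal c f t0 l : lim_r0 f t0 l -> lim_r0 (fun u v => c * f u v) t0 (c * l).
Proof. intros. apply lim_r0_mult; auto. apply lim_r0_const. Qed.

Lemma lim_r0_fixed_t g t l : lim_r0 g t l -> forall eps : posreal, exists d : posreal,
  forall u, 0 < u < d -> Rabs (g u t - l) < eps.
Proof.
  intros H eps. destruct (H eps) as [d Hd]. exists d. intros u Hu. apply Hd; auto.
  rewrite Rminus_eq_0, Rabs_R0. apply cond_pos.
Qed.

Lemma continuous_of_eps_delta (a : R -> R) t0 :
  (forall eps : posreal, exists d : posreal,
     forall y, Rabs (y - t0) < d -> Rabs (a y - a t0) < eps) ->
  continuous a t0.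
Proof.
  intros H P [eps HP]. destruct (H eps) as [d Hd]. exists d. intros y Hy. apply HP, Hd, Hy.
Qed.

Lemma eps_delta_of_continuous (a : R -> R) t0 : continuous a t0 ->
  forall eps : posreal, exists d : posreal,
    forall y, Rabs (y - t0) < d -> Rabs (a y - a t0) < eps.
Proof.
  intros H eps.
  destruct (H (fun y => Rabs (y - a t0) < eps)) as [d Hd]; [now exists eps|].
  exists d. intros y Hy. apply Hd, Hy.
Qed.

Lemma lim_r0_continuous (g : R -> R -> R) (a : R -> R) :
  (forall t, lim_r0 g t (a t)) -> forall t0, continuous a t0.
Proof.
  intros H t0. apply continuous_of_eps_delta. intros eps.
  assert (He2 : 0 < eps/2) by (pose proof (cond_pos eps); lra).
  destruct (H t0 (mkposreal _ He2)) as [d Hd]. exists d. intros y Hy.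
  destruct (lim_r0_fixed_t g y (a y) (H y) (mkposreal _ He2)) as [d' Hd']. simpl in *.
  set (u := Rmin d d' / 2).
  assert (0 < Rmin d d') by (apply Rmin_pos; apply cond_pos).
  pose proof (Rmin_l d d'); pose proof (Rmin_r d d').
  specialize (Hd u y ltac:(unfold u; lra) Hy). specialize (Hd' u ltac:(unfold u; lra)).
  replace (a y - a t0) with (-(g u y - a y) + (g u y - a t0)) by ring.
  eapply Rle_lt_trans; [apply Rabs_triang|]. rewrite Rabs_Ropp. lra.
Qed.

(** * Mean value estimates *)

Lemma is_derive_continuity_pt (k : R -> R) y l : is_derive k y l -> continuity_pt k y.
Proof.
  intros H. apply continuity_pt_filterlim.
  apply (ex_derive_continuous (K:=R_AbsRing) (V:=R_NormedModule)). now exists l.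
Qed.

Lemma MVT_bound (k dk : R -> R) a b M eps : a < b ->
  (forall y, a < y < b -> is_derive k y (dk y)) ->
  (forall y, a <= y <= b -> continuity_pt k y) ->
  (forall y, a <= y <= b -> Rabs (dk y - M) <= eps) ->
  Rabs (k b - k a - M * (b - a)) <= eps * (b - a).
Proof.
  intros Hab Hd Hc Hb.
  destruct (MVT_gen k a b dk) as [c [Hc1 Hc2]].
  - rewrite Rmin_left, Rmax_right by lra. exact Hd.
  - rewrite Rmin_left, Rmax_right by lra. exact Hc.
  - rewrite Rmin_left, Rmax_right in Hc1 by lra.
    rewrite Hc2. replace (dk c * (b - a) - M * (b - a)) with ((dk c - M) * (b - a)) by ring.
    rewrite Rabs_mult, (Rabs_pos_eq (b - a)) by lra.
    apply Rmult_le_compat_r; [lra|]. apply Hb; lra.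
Qed.

(* The MVT on [eta, rho] for small eta > 0, letting eta -> 0+. *)
Lemma MVT_bound_from0 (k dk : R -> R) rho L eps k0 : 0 < rho ->
  (forall y, 0 < y <= rho -> is_derive k y (dk y)) ->
  (forall y, 0 < y <= rho -> Rabs (dk y - L) <= eps) ->
  (forall g : posreal, exists d : posreal, forall y, 0 < y < d -> Rabs (k y - k0) < g) ->
  Rabs (k rho - k0 - L * rho) <= eps * rho.
Proof.
  intros Hr Hd Hb Hl.
  apply le_epsilon. intros g Hg.
  assert (Hg2 : 0 < g / 2) by lra.
  destruct (Hl (mkposreal _ Hg2)) as [d Hd']. simpl in Hd'.
  assert (HL : 0 < Rabs L + 1) by (pose proof (Rabs_pos L); lra).
  set (eta := Rmin (Rmin (d/2) (rho/2)) (g / (2 * (Rabs L + 1)))).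
  assert (Heta : 0 < eta).
  { unfold eta. pose proof (cond_pos d).
    repeat apply Rmin_pos; try lra. apply Rdiv_lt_0_compat; lra. }
  assert (Heta1 : eta <= d/2) by (unfold eta; eapply Rle_trans; [apply Rmin_l|apply Rmin_l]).
  assert (Heta2 : eta <= rho/2) by (unfold eta; eapply Rle_trans; [apply Rmin_l|apply Rmin_r]).
  assert (Heta3 : eta <= g / (2 * (Rabs L + 1))) by (unfold eta; apply Rmin_r).
  assert (Hm : Rabs (k rho - k eta - L * (rho - eta)) <= eps * (rho - eta)).
  { apply (MVT_bound k dk eta rho L eps); try lra.
    - intros y Hy. apply Hd; lra.
    - intros y Hy. apply (is_derive_continuity_pt k y (dk y)). apply Hd; lra.
    - intros y Hy. apply Hb; lra. }
  assert (Hk : Rabs (k eta - k0) < g/2) by (apply Hd'; pose proof (cond_pos d); lra).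
  assert (HLe : Rabs L * eta <= g / 2).
  { assert (eta * (2 * (Rabs L + 1)) <= g).
    { apply Rle_trans with (g / (2 * (Rabs L + 1)) * (2 * (Rabs L + 1))).
      - apply Rmult_le_compat_r; lra.
      - right; field; lra. }
    pose proof (Rabs_pos L). nra. }
  assert (Heps : 0 <= eps).
  { specialize (Hb rho ltac:(lra)). pose proof (Rabs_pos (dk rho - L)). lra. }
  replace (k rho - k0 - L * rho)
    with ((k rho - k eta - L * (rho - eta)) + (k eta - k0) + (- (L * eta))) by ring.
  eapply Rle_trans; [apply Rabs_triang|].
  eapply Rle_trans; [apply Rplus_le_compat; [apply Rabs_triang | right; apply Rabs_Ropp]|].
  rewrite Rabs_mult, (Rabs_pos_eq eta) by lra.
  assert (0 <= eps * eta) by (apply Rmult_le_pos; lra).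
  lra.
Qed.

Lemma Rbetween_abs_le a h c : Rmin a (a+h) <= c <= Rmax a (a+h) -> Rabs (c - a) <= Rabs h.
Proof. unfold Rmin, Rmax; destruct Rle_dec; intros; unfold Rabs; repeat destruct Rcase_abs; lra. Qed.

Lemma Rbetween_neq a h c : h <> 0 -> Rmin a (a+h) < c < Rmax a (a+h) -> c <> a.
Proof. unfold Rmin, Rmax; destruct Rle_dec; intros; lra. Qed.

Lemma is_derive_of_punctured (k d : R -> R) : continuous k 0 ->
  (forall h, h <> 0 -> is_derive k h (d h)) -> continuous d 0 -> is_derive k 0 (d 0).
Proof.
  intros Hk Hd Hc. apply is_derive_Reals. intros eps Heps.
  destruct (eps_delta_of_continuous d 0 Hc (mkposreal eps Heps)) as [de Hde]. simpl in Hde.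
  exists de. intros h Hh0 Hh.
  destruct (MVT_gen k 0 (0+h) d) as [c [Hc1 Hc2]].
  - intros y Hy. apply Hd. eapply Rbetween_neq; eauto.
  - intros y Hy. destruct (Req_dec y 0) as [->|Hy0].
    + apply continuity_pt_filterlim. exact Hk.
    + apply (is_derive_continuity_pt k y (d y)). apply Hd; auto.
  - rewrite Hc2. replace ((d c * (0+h-0))/h - d 0) with (d c - d 0) by (field; auto).
    apply Hde. pose proof (Rbetween_abs_le 0 h c Hc1). lra.
Qed.

Lemma lim_r0_increment_bound (G Gt : R -> R -> R) (L : R -> R) t0 h M eps (de : posreal) :
  (forall u t, 0 < u -> is_derive (fun s => G u s) t (Gt u t)) ->
  (forall t, lim_r0 G t (L t)) ->
  (forall u v, 0 < u < de -> Rabs (v - t0) < de -> Rabs (Gt u v - M) < eps) ->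
  Rabs h < de -> Rabs (L (t0 + h) - L t0 - M * h) <= eps * Rabs h.
Proof.
  intros Hd HL Hde Hh.
  apply le_epsilon. intros g Hg. assert (Hg2 : 0 < g/2) by lra.
  destruct (lim_r0_fixed_t G (t0+h) _ (HL _) (mkposreal _ Hg2)) as [d1 Hd1].
  destruct (lim_r0_fixed_t G t0 _ (HL _) (mkposreal _ Hg2)) as [d2 Hd2]. simpl in *.
  set (u := Rmin de (Rmin d1 d2) / 2).
  assert (0 < Rmin de (Rmin d1 d2)) by (repeat apply Rmin_pos; apply cond_pos).
  pose proof (Rmin_l de (Rmin d1 d2)). pose proof (Rmin_r de (Rmin d1 d2)).
  pose proof (Rmin_l d1 d2). pose proof (Rmin_r d1 d2).
  assert (Hu : 0 < u) by (unfold u; lra).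
  destruct (MVT_gen (fun s => G u s) t0 (t0+h) (Gt u)) as [c [Hc1 Hc2]].
  - intros y Hy. apply Hd; auto.
  - intros y Hy. apply (is_derive_continuity_pt _ y (Gt u y)). apply Hd; auto.
  - simpl in Hc2. pose proof (Rbetween_abs_le t0 h c Hc1).
    assert (HH1 : Rabs (Gt u c - M) < eps) by (apply Hde; unfold u; lra).
    assert (HH2 : Rabs (G u (t0 + h) - L (t0 + h)) < g/2) by (apply Hd1; unfold u; lra).
    assert (HH3 : Rabs (G u t0 - L t0) < g/2) by (apply Hd2; unfold u; lra).
    replace (L (t0 + h) - L t0 - M * h) with
      ((G u (t0 + h) - G u t0 - M * (t0 + h - t0))
       - (G u (t0 + h) - L (t0 + h)) + (G u t0 - L t0)) by ring.
    rewrite Hc2.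
    replace (Gt u c * (t0 + h - t0) - M * (t0 + h - t0)) with ((Gt u c - M) * h) by ring.
    eapply Rle_trans; [apply Rabs_triang|].
    eapply Rle_trans; [apply Rplus_le_compat_r; apply Rabs_triang|].
    rewrite Rabs_Ropp, Rabs_mult.
    assert (Rabs (Gt u c - M) * Rabs h <= eps * Rabs h)
      by (apply Rmult_le_compat_r; [apply Rabs_pos|lra]).
    lra.
Qed.

Lemma lim_r0_is_derive (G Gt : R -> R -> R) (L : R -> R) t0 M :
  (forall u t, 0 < u -> is_derive (fun s => G u s) t (Gt u t)) ->
  (forall t, lim_r0 G t (L t)) -> lim_r0 Gt t0 M -> is_derive L t0 M.
Proof.
  intros Hd HL HM. apply is_derive_Reals. intros eps Heps.
  assert (He2 : 0 < eps / 2) by lra.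
  destruct (HM (mkposreal _ He2)) as [de Hde]. simpl in Hde.
  exists de. intros h Hh0 Hh.
  pose proof (lim_r0_increment_bound G Gt L t0 h M (eps/2) de Hd HL Hde Hh) as Hc.
  replace ((L (t0 + h) - L t0) / h - M) with ((L (t0 + h) - L t0 - M * h) / h) by (field; auto).
  unfold Rdiv. rewrite Rabs_mult, Rabs_inv.
  assert (Hh' : 0 < Rabs h) by (apply Rabs_pos_lt; auto).
  apply Rle_lt_trans with (eps/2); [|lra].
  apply Rmult_le_reg_r with (Rabs h); auto. rewrite Rmult_assoc, Rinv_l by lra. lra.
Qed.

Lemma lim_r0_dt_zero (G Gt : R -> R -> R) t0 :
  (forall u t, 0 < u -> is_derive (fun s => G u s) t (Gt u t)) ->
  (forall t, lim_r0 G t 0) -> (exists l, lim_r0 Gt t0 l) -> lim_r0 Gt t0 0.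
Proof.
  intros Hd H0 [l Hl].
  replace 0 with l; [exact Hl|].
  rewrite <- (Derive_const 0 t0).
  symmetry; apply is_derive_unique.
  exact (lim_r0_is_derive G Gt (fun _ => 0) t0 l Hd H0 Hl).
Qed.

Lemma lim_r0_div_r (chi chir : R -> R -> R) t0 l :
  (forall u t, 0 < u -> is_derive (fun y => chi y t) u (chir u t)) ->
  (forall t, lim_r0 chi t 0) -> lim_r0 chir t0 l -> lim_r0 (fun u v => chi u v / u) t0 l.
Proof.
  intros Hd H0 Hl eps. assert (He2 : 0 < eps / 2) by (pose proof (cond_pos eps); lra).
  destruct (Hl (mkposreal _ He2)) as [de Hde]. simpl in Hde. exists de. intros u v Hu Hv.
  assert (Hm : Rabs (chi u v - 0 - l * u) <= eps/2 * u).
  { apply (MVT_bound_from0 (fun y => chi y v) (fun y => chir y v)); try lra.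
    - intros y Hy. apply Hd. lra.
    - intros y Hy. left. apply Hde; auto. lra.
    - apply (lim_r0_fixed_t chi v 0 (H0 v)). }
  replace (chi u v / u - l) with ((chi u v - 0 - l * u) / u) by (field; lra).
  unfold Rdiv. rewrite Rabs_mult, Rabs_inv, (Rabs_pos_eq u) by lra.
  apply Rle_lt_trans with (eps/2); [|lra].
  apply Rmult_le_reg_r with u; [lra|]. rewrite Rmult_assoc, Rinv_l by lra. lra.
Qed.

Lemma lim_r0_div_r2 (chi chir : R -> R -> R) t0 :
  (forall u t, 0 < u -> is_derive (fun y => chi y t) u (chir u t)) ->
  (forall t, lim_r0 chi t 0) -> lim_r0 (fun u v => chir u v / u) t0 0 ->
  lim_r0 (fun u v => chi u v / (u * u)) t0 0.
Proof.
  intros Hd H0 Hl eps. assert (He2 : 0 < eps / 2) by (pose proof (cond_pos eps); lra).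
  destruct (Hl (mkposreal _ He2)) as [de Hde]. simpl in Hde. exists de. intros u v Hu Hv.
  assert (Hm : Rabs (chi u v - 0 - 0 * u) <= (eps/2 * u) * u).
  { apply (MVT_bound_from0 (fun y => chi y v) (fun y => chir y v)); try lra.
    - intros y Hy. apply Hd. lra.
    - intros y Hy. assert (Hy' : Rabs (chir y v / y - 0) < eps/2) by (apply Hde; auto; lra).
      rewrite Rminus_0_r in *. replace (chir y v) with (chir y v / y * y) by (field; lra).
      rewrite Rabs_mult, (Rabs_pos_eq y) by lra.
      apply Rmult_le_compat; try lra; apply Rabs_pos.
    - apply (lim_r0_fixed_t chi v 0 (H0 v)). }
  replace (chi u v / (u * u) - 0) with ((chi u v - 0 - 0 * u) / (u * u)) by (field; lra).
  unfold Rdiv. rewrite Rabs_mult, Rabs_inv, (Rabs_pos_eq (u * u)) by nra.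
  apply Rle_lt_trans with (eps/2); [|lra].
  apply Rmult_le_reg_r with (u * u); [nra|]. rewrite Rmult_assoc, Rinv_l by nra. lra.
Qed.

Notation P4 := (R * R * R * R)%type.

Definition addv (x : R3) (h : R) (e : R3) : R3 :=
  (c1 x + h * c1 e, c2 x + h * c2 e, c3 x + h * c3 e).
Definition dot (x e : R3) : R := c1 x * c1 e + c2 x * c2 e + c3 x * c3 e.

Definition is_dx (f : P4 -> R) (e : R3) (z : P4) (l : R) : Prop :=
  is_derive (fun h => f (addv (fst z) h e, snd z)) 0 l.
Definition is_dt (f : P4 -> R) (z : P4) (l : R) : Prop :=
  is_derive (fun h => f (fst z, snd z + h)) 0 l.

Lemma plus_scal_space (z : P4) (e : R3) (h : R) :
  plus z (scal h (e, 0)) = (addv (fst z) h e, snd z).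
Proof.
  destruct z as [[[x1 x2] x3] t], e as [[e1 e2] e3].
  change (plus (x1,x2,x3,t) (scal h (e1,e2,e3,0)))
    with ((x1 + h*e1, x2 + h*e2, x3 + h*e3), t + h*0).
  unfold addv, c1, c2, c3; simpl. apply injective_projections; simpl; [reflexivity | ring].
Qed.

Lemma plus_scal_time (z : P4) h : plus z (scal h (0,0,0,1)) = (fst z, snd z + h).
Proof.
  destruct z as [[[x1 x2] x3] t].
  change (plus (x1,x2,x3,t) (scal h (0,0,0,1)))
    with ((x1 + h*0, x2 + h*0, x3 + h*0), t + h*1).
  simpl. f_equal; [f_equal; [f_equal|]|]; ring.
Qed.

Lemma inB3 e : In e B3 -> e = (1,0,0) \/ e = (0,1,0) \/ e = (0,0,1).
Proof. simpl. intuition. Qed.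

Lemma inB4 v : In v B4 -> (exists e, In e B3 /\ v = (e, 0)) \/ v = (0,0,0,1).
Proof.
  simpl. intros [H|[H|[H|[H|[]]]]]; subst.
  - left. exists (1,0,0). simpl; auto.
  - left. exists (0,1,0). simpl; auto.
  - left. exists (0,0,1). simpl; auto.
  - right; reflexivity.
Qed.

Lemma is_derive_shift (k : R -> R) (t l : R) :
  is_derive (fun h => k (t + h)) 0 l <-> is_derive k t l.
Proof.
  rewrite !is_derive_Reals. split; intros H eps He;
    destruct (H eps He) as [d Hd]; exists d; intros h Hh0 Hh; specialize (Hd h Hh0 Hh);
    simpl in *; rewrite ?Rplus_0_r, ?Rplus_0_l in *; exact Hd.
Qed.

Lemma Derive_of_is_derive (f : R -> R) (x l : R) : is_derive f x l -> Derive f x = l.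
Proof. apply is_derive_unique. Qed.

Lemma is_derive_eq (f : R -> R) (x l l' : R) : is_derive f x l -> l = l' -> is_derive f x l'.
Proof. intros H ->; exact H. Qed.

Section RealContinuity.
Context {U : UniformSpace}.

Lemma continuous_Rmult (f g : U -> R) x :
  continuous f x -> continuous g x -> continuous (fun y => f y * g y) x.
Proof. exact (continuous_mult (K:=R_AbsRing) f g x). Qed.

Lemma continuous_Rplus (f g : U -> R) x :
  continuous f x -> continuous g x -> continuous (fun y => f y + g y) x.
Proof. exact (continuous_plus (V:=R_NormedModule) f g x). Qed.

Lemma continuous_Rconst (c : R) x : continuous (fun _ : U => c) x.
Proof. apply continuous_const. Qed.

Lemma continuous_pairing {V W : UniformSpace} (f : U -> V) (g : U -> W) x :
  continuous f x -> continuous g x -> continuous (fun y => (f y, g y)) x.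
Proof.
  intros Hf Hg. apply (continuous_comp_2 f g pair x Hf Hg).
  apply (continuous_ext (fun p => p)); [intros [a b]; reflexivity | apply continuous_id].
Qed.

End RealContinuity.

Lemma continuous_c1 (x : R3) : continuous c1 x.
Proof.
  destruct x as [[a b] c]. apply (continuous_comp fst fst); apply continuous_fst.
Qed.
Lemma continuous_c2 (x : R3) : continuous c2 x.
Proof.
  destruct x as [[a b] c]. apply (continuous_comp fst snd); [apply continuous_fst|apply continuous_snd].
Qed.
Lemma continuous_c3 (x : R3) : continuous c3 x.
Proof. destruct x as [[a b] c]. apply continuous_snd. Qed.

Local Notation R3_UniformSpace :=
  (prod_UniformSpace (prod_UniformSpace R_UniformSpace R_UniformSpace) R_UniformSpace).

Lemma continuous_dot (x u : R3) : continuous (fun y => dot y u) x.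
Proof.
  unfold dot.
  apply (@continuous_Rplus R3_UniformSpace); [apply (@continuous_Rplus R3_UniformSpace)|];
    apply (@continuous_Rmult R3_UniformSpace); try apply continuous_Rconst.
  - apply continuous_c1.
  - apply continuous_c2.
  - apply continuous_c3.
Qed.

Lemma continuous_norm3 (x : R3) : continuous norm3 x.
Proof.
  apply (continuous_comp (fun y => c1 y ^ 2 + c2 y ^ 2 + c3 y ^ 2) sqrt);
    [|apply continuous_sqrt].
  assert (Hsq : forall f : R3 -> R, continuous f x -> continuous (fun y => f y ^ 2) x).
  { intros f Hf. apply (continuous_ext (fun y => f y * f y)); [intros y; simpl; ring|].
    now apply (@continuous_Rmult R3_UniformSpace). }
  apply (@continuous_Rplus R3_UniformSpace); [apply (@continuous_Rplus R3_UniformSpace)|];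
    apply Hsq.
  - apply continuous_c1.
  - apply continuous_c2.
  - apply continuous_c3.
Qed.

Lemma continuous_space (z : P4) : continuous (fun z : P4 => fst z) z.
Proof. destruct z. apply continuous_fst. Qed.
Lemma continuous_time (z : P4) : continuous (fun z : P4 => snd z) z.
Proof. destruct z. apply continuous_snd. Qed.

Lemma norm3_pos x : 0 <= norm3 x.
Proof. apply sqrt_pos. Qed.

Lemma norm3_sq x : norm3 x * norm3 x = c1 x ^ 2 + c2 x ^ 2 + c3 x ^ 2.
Proof. apply sqrt_sqrt. nra. Qed.

Lemma norm3_eq0 x : norm3 x = 0 -> x = (0,0,0).
Proof.
  intros H. pose proof (norm3_sq x) as Hs. rewrite H in Hs.
  destruct x as [[a b] c]. unfold c1, c2, c3 in Hs; simpl in Hs.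
  assert (a = 0) by nra. assert (b = 0) by nra. assert (c = 0) by nra. subst; reflexivity.
Qed.

Lemma norm3_0 : norm3 (0,0,0) = 0.
Proof.
  unfold norm3, c1, c2, c3; cbn [fst snd].
  replace (0 ^ 2 + 0 ^ 2 + 0 ^ 2) with 0 by ring. apply sqrt_0.
Qed.

Lemma Rabs_le_norm3 a x : a ^ 2 <= c1 x ^ 2 + c2 x ^ 2 + c3 x ^ 2 -> Rabs a <= norm3 x.
Proof.
  intros H. rewrite <- (Rabs_pos_eq (norm3 x)) by apply norm3_pos.
  apply Rsqr_le_abs_0. unfold Rsqr. rewrite norm3_sq. nra.
Qed.

Lemma Rabs_dot_B3_le x u : In u B3 -> Rabs (dot x u) <= norm3 x.
Proof.
  intros Hu. apply Rabs_le_norm3. apply inB3 in Hu.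
  destruct x as [[a b] c].
  destruct Hu as [Hu|[Hu|Hu]]; subst u; unfold dot, c1, c2, c3; simpl; nra.
Qed.

Lemma norm3_le_sum x : norm3 x <= Rabs (c1 x) + Rabs (c2 x) + Rabs (c3 x).
Proof.
  pose proof (Rabs_pos (c1 x)); pose proof (Rabs_pos (c2 x)); pose proof (Rabs_pos (c3 x)).
  apply Rsqr_incr_0_var; [|lra].
  unfold Rsqr. rewrite norm3_sq.
  pose proof (pow2_abs (c1 x)); pose proof (pow2_abs (c2 x)); pose proof (pow2_abs (c3 x)).
  nra.
Qed.

Lemma norm3_scal k x : norm3 (k * c1 x, k * c2 x, k * c3 x) = Rabs k * norm3 x.
Proof.
  destruct x as [[a b] c]. unfold norm3, c1, c2, c3. cbn [fst snd].
  replace ((k * a) ^ 2 + (k * b) ^ 2 + (k * c) ^ 2) with (k ^ 2 * (a ^ 2 + b ^ 2 + c ^ 2)) by ring.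
  rewrite sqrt_mult_alt by apply pow2_ge_0.
  rewrite <- (pow2_abs k), sqrt_pow2 by apply Rabs_pos. reflexivity.
Qed.

Lemma norm3_axis r : 0 <= r -> norm3 (r,0,0) = r.
Proof.
  intros Hr. unfold norm3, c1, c2, c3; cbn [fst snd].
  replace (r ^ 2 + 0 ^ 2 + 0 ^ 2) with (r ^ 2) by ring. apply sqrt_pow2; auto.
Qed.

Lemma addv0 x e : addv x 0 e = x.
Proof. destruct x as [[a b] c]. unfold addv, c1, c2, c3; simpl. f_equal; [f_equal|]; ring. Qed.

Lemma addv_addv x e h h' : addv (addv x h e) h' e = addv x (h + h') e.
Proof. destruct x as [[a b] c]. unfold addv, c1, c2, c3; simpl. f_equal; [f_equal|]; ring. Qed.

Lemma norm3_addv_origin e h : In e B3 -> norm3 (addv (0,0,0) h e) = Rabs h.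
Proof.
  intros He. apply inB3 in He. unfold norm3, addv.
  destruct He as [He|[He|He]]; subst e; unfold c1, c2, c3; simpl;
    rewrite <- sqrt_Rsqr_abs; f_equal; unfold Rsqr; ring.
Qed.

Lemma is_derive_norm3 x e : norm3 x <> 0 ->
  is_derive (fun h => norm3 (addv x h e)) 0 (dot x e / norm3 x).
Proof.
  intros Hn.
  assert (Hp : 0 < c1 x ^ 2 + c2 x ^ 2 + c3 x ^ 2).
  { pose proof (norm3_pos x). rewrite <- norm3_sq. nra. }
  unfold norm3, addv, dot. destruct x as [[a b] c], e as [[e1 e2] e3].
  unfold c1, c2, c3 in *; simpl in *.
  assert (0 < sqrt (a^2+b^2+c^2)) by (apply sqrt_lt_R0; nra).
  auto_derive.
  - nra.
  - replace ((a + 0 * e1) * ((a + 0 * e1) * 1) + (b + 0 * e2) * ((b + 0 * e2) * 1)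
             + (c + 0 * e3) * ((c + 0 * e3) * 1)) with (a ^ 2 + b ^ 2 + c ^ 2) by ring.
    replace (a * (a * 1) + b * (b * 1) + c * (c * 1)) with (a ^ 2 + b ^ 2 + c ^ 2) by ring.
    field. lra.
Qed.

Lemma continuous_line x0 e t : continuous (fun h : R => ((addv x0 h e, t) : P4)) 0.
Proof.
  apply continuous_pairing; [|apply continuous_Rconst].
  unfold addv.
  change (continuous (fun h : R => ((c1 x0 + h * c1 e, c2 x0 + h * c2 e, c3 x0 + h * c3 e)
                                     : R * R * R)) 0).
  repeat apply continuous_pairing; apply continuous_Rplus; try apply continuous_Rconst;
    apply continuous_Rmult; auto using continuous_Rconst, continuous_id.
Qed.

Lemma locally_line_norm3_neq0 x e : norm3 x <> 0 -> locally 0 (fun h => norm3 (addv x h e) <> 0).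
Proof.
  intros Hn.
  assert (Hc : continuous (fun h => norm3 (addv x h e)) 0).
  { apply (ex_derive_continuous (K:=R_AbsRing) (V:=R_NormedModule)).
    eexists; exact (is_derive_norm3 x e Hn). }
  assert (Hp : 0 < Rabs (norm3 x)) by (apply Rabs_pos_lt; auto).
  apply (Hc (fun y => y <> 0)). rewrite addv0.
  exists (mkposreal _ Hp). intros y Hy. change (Rabs (y - norm3 x) < Rabs (norm3 x)) in Hy.
  intros ->. rewrite Rminus_0_l, Rabs_Ropp in Hy. lra.
Qed.

Definition radial_fun (g : R -> R -> R) (m : R3 -> R) (F0 : R -> R) (z : P4) : R :=
  if Req_EM_T (norm3 (fst z)) 0 then F0 (snd z) else g (norm3 (fst z)) (snd z) * m (fst z).

Lemma radial_fun_nz g m F0 x t : norm3 x <> 0 -> radial_fun g m F0 (x,t) = g (norm3 x) t * m x.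
Proof. intros H. unfold radial_fun; simpl. destruct Req_EM_T; [contradiction|reflexivity]. Qed.

Lemma radial_fun_axis g m F0 x t : norm3 x = 0 -> radial_fun g m F0 (x,t) = F0 t.
Proof. intros H. unfold radial_fun; simpl. destruct Req_EM_T; [reflexivity|contradiction]. Qed.

Lemma radial_fun_dx (g : R -> R -> R) (m : R3 -> R) F0 x t e gr dm : norm3 x <> 0 ->
  is_derive (fun y => g y t) (norm3 x) gr ->
  is_derive (fun h => m (addv x h e)) 0 dm ->
  is_dx (radial_fun g m F0) e (x,t) (gr * (dot x e / norm3 x) * m x + g (norm3 x) t * dm).
Proof.
  intros Hn Hg Hm. unfold is_dx; simpl.
  apply is_derive_ext_loc with (fun h => g (norm3 (addv x h e)) t * m (addv x h e)).
  { apply filter_imp with (2 := locally_line_norm3_neq0 x e Hn).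
    intros h Hh. rewrite radial_fun_nz; auto. }
  assert (Hc : is_derive (fun h => g (norm3 (addv x h e)) t) 0 (dot x e / norm3 x * gr)).
  { apply (is_derive_comp (fun y => g y t) (fun h => norm3 (addv x h e))).
    - rewrite addv0. exact Hg.
    - apply is_derive_norm3; auto. }
  pose proof (is_derive_mult _ _ _ _ _ Hc Hm ltac:(intros; apply Rmult_comm)) as H.
  simpl in H. rewrite addv0 in H. eapply is_derive_eq; [exact H|].
  change (plus (mult (dot x e / norm3 x * gr) (m x)) (mult (g (norm3 x) t) dm)) with
    ((dot x e / norm3 x * gr) * (m x) + (g (norm3 x) t) * dm). ring.
Qed.

Lemma radial_fun_dt (g : R -> R -> R) (m : R3 -> R) F0 x t gt : norm3 x <> 0 ->
  is_derive (fun s => g (norm3 x) s) t gt -> is_dt (radial_fun g m F0) (x,t) (gt * m x).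
Proof.
  intros Hn Hg. unfold is_dt; simpl.
  apply is_derive_ext with (fun h => g (norm3 x) (t + h) * m x).
  { intros h. rewrite radial_fun_nz; auto. }
  apply is_derive_shift in Hg.
  exact (is_derive_scal_l (fun h => g (norm3 x) (t + h)) 0 gt (m x) Hg).
Qed.

Lemma radial_fun_dt_axis (g : R -> R -> R) (m : R3 -> R) F0 x t l : norm3 x = 0 ->
  is_derive F0 t l -> is_dt (radial_fun g m F0) (x,t) l.
Proof.
  intros Hn Hg. unfold is_dt; simpl.
  apply is_derive_ext with (fun h => F0 (t + h)).
  { intros h. rewrite radial_fun_axis; auto. }
  now apply is_derive_shift.
Qed.

(* Only h = 0 of the line h |-> h e lies on the axis, so is_derive_of_punctured applies. *)
Lemma is_dx_axis (G D : P4 -> R) e t : In e B3 ->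
  (forall z, norm3 (fst z) <> 0 -> is_dx G e z (D z)) ->
  continuous G ((0,0,0),t) -> continuous D ((0,0,0),t) -> is_dx G e ((0,0,0),t) (D ((0,0,0),t)).
Proof.
  intros He Hd HG HD. unfold is_dx; simpl.
  assert (Hk : continuous (fun h => G (addv (0,0,0) h e, t)) 0).
  { apply (continuous_comp (fun h => (addv (0,0,0) h e, t)) G).
    apply continuous_line. rewrite addv0. exact HG. }
  assert (Hdc : continuous (fun h => D (addv (0,0,0) h e, t)) 0).
  { apply (continuous_comp (fun h => (addv (0,0,0) h e, t)) D).
    apply continuous_line. rewrite addv0. exact HD. }
  pose proof (is_derive_of_punctured _ (fun h => D (addv (0,0,0) h e, t)) Hk) as H. simpl in H. rewrite addv0 in H.
  apply H; auto.
  intros h Hh. apply is_derive_shift.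
  assert (Hn : norm3 (addv (0,0,0) h e) <> 0)
    by (rewrite norm3_addv_origin by auto; apply Rabs_no_R0; auto).
  specialize (Hd (addv (0,0,0) h e, t) Hn). unfold is_dx in Hd; simpl in Hd.
  eapply is_derive_ext; [|exact Hd]. intros h'. simpl. rewrite addv_addv. reflexivity.
Qed.

Lemma radial_fun_continuous_nz g m F0 x t : norm3 x <> 0 -> continuity_2d_pt g (norm3 x) t ->
  continuous m x -> continuous (radial_fun g m F0) (x,t).
Proof.
  intros Hn Hg Hm.
  assert (Hc : continuous (fun z : P4 => norm3 (fst z)) (x,t))
    by (apply (continuous_comp (fun z : P4 => fst z) norm3);
        [apply continuous_space | apply continuous_norm3]).
  apply continuous_ext_loc with (fun z => g (norm3 (fst z)) (snd z) * m (fst z)).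
  - assert (Hp : 0 < Rabs (norm3 x)) by (apply Rabs_pos_lt; auto).
    assert (Hl : locally (norm3 (fst (x,t))) (fun y => y <> 0)).
    { exists (mkposreal _ Hp). intros y Hy. change (Rabs (y - norm3 x) < Rabs (norm3 x)) in Hy.
      intros ->. rewrite Rminus_0_l, Rabs_Ropp in Hy. lra. }
    apply (filter_imp (fun z : P4 => norm3 (fst z) <> 0)); [|exact (Hc _ Hl)].
    intros [y s] Hz. simpl in *. rewrite radial_fun_nz; auto.
  - apply (continuous_Rmult (fun z : P4 => g (norm3 (fst z)) (snd z)) (fun z : P4 => m (fst z))).
    + apply (continuous_comp_2 (fun z : P4 => norm3 (fst z)) (fun z : P4 => snd z) g).
      * exact Hc.
      * apply continuous_time.
      * apply continuity_2d_pt_filterlim. exact Hg.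
    + apply (continuous_comp (fun z : P4 => fst z) m); [apply continuous_space | exact Hm].
Qed.

Lemma continuous_P4_of_eps_delta (f : P4 -> R) z :
  (forall eps : posreal, exists d : posreal, forall z' : P4,
     Rabs (c1 (fst z') - c1 (fst z)) < d -> Rabs (c2 (fst z') - c2 (fst z)) < d ->
     Rabs (c3 (fst z') - c3 (fst z)) < d -> Rabs (snd z' - snd z) < d ->
     Rabs (f z' - f z) < eps) -> continuous f z.
Proof.
  intros H P [eps HP]. destruct (H eps) as [d Hd]. exists d. intros z' Hz'.
  apply HP. destruct z as [[[a b] c] t], z' as [[[a' b'] c'] t'].
  destruct Hz' as [[[H1 H2] H3] H4]. apply Hd; assumption.
Qed.

Lemma radial_fun_continuous_axis g m F0 t0 : continuous F0 t0 ->
  (forall eps : posreal, exists d : posreal, forall x t, 0 < norm3 x < d -> Rabs (t - t0) < d ->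
     Rabs (g (norm3 x) t * m x - F0 t0) < eps) ->
  continuous (radial_fun g m F0) ((0,0,0),t0).
Proof.
  intros HF Hb. apply continuous_P4_of_eps_delta. intros eps.
  destruct (Hb eps) as [d1 Hd1], (eps_delta_of_continuous F0 t0 HF eps) as [d2 Hd2].
  assert (Hm : 0 < Rmin (d1/3) d2)
    by (apply Rmin_pos; [pose proof (cond_pos d1); lra | apply cond_pos]).
  exists (mkposreal _ Hm). simpl. intros [x t] H1 H2 H3 H4. simpl in *.
  pose proof (Rmin_l (d1/3) d2); pose proof (Rmin_r (d1/3) d2).
  rewrite (radial_fun_axis _ _ _ (0,0,0)) by apply norm3_0.
  unfold c1, c2, c3 in H1, H2, H3; simpl in H1, H2, H3.
  rewrite Rminus_0_r in H1, H2, H3.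
  destruct (Req_dec (norm3 x) 0) as [Hz|Hz].
  - rewrite radial_fun_axis by auto. apply Hd2. lra.
  - rewrite radial_fun_nz by auto. apply Hd1; [|lra].
    pose proof (norm3_pos x); pose proof (norm3_le_sum x). unfold c1, c2, c3 in *. lra.
Qed.

Definition is_dir (f : P4 -> R) (v : P4) (z : P4) (l : R) : Prop :=
  is_derive (fun h => f (plus z (scal h v))) 0 l.

Definition C1_P4 (f : P4 -> R) : Prop :=
  (forall z, continuous f z) /\
  forall v, In v B4 -> exists D : P4 -> R, (forall z, is_dir f v z (D z)) /\ forall z, continuous D z.

Lemma B4_partials (f : P4 -> R) (P : (P4 -> R) -> Prop) :
  (forall e, In e B3 -> exists D, (forall z, is_dx f e z (D z)) /\ P D) ->
  (exists D, (forall z, is_dt f z (D z)) /\ P D) ->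
  forall v, In v B4 -> exists D, (forall z, is_dir f v z (D z)) /\ P D.
Proof.
  intros Hs Ht v Hv. destruct (inB4 v Hv) as [[e [He ->]] | ->].
  - destruct (Hs e He) as [D [HD HP]]. exists D. split; auto.
    intros z. unfold is_dir. eapply is_derive_ext; [|apply HD].
    intros h. simpl. now rewrite plus_scal_space.
  - destruct Ht as [D [HD HP]]. exists D. split; auto.
    intros z. unfold is_dir. eapply is_derive_ext; [|apply HD].
    intros h. simpl. now rewrite plus_scal_time.
Qed.

Lemma C1_P4_intro f : (forall z, continuous f z) ->
  (forall e, In e B3 -> exists D, (forall z, is_dx f e z (D z)) /\ forall z, continuous D z) ->
  (exists D, (forall z, is_dt f z (D z)) /\ forall z, continuous D z) -> C1_P4 f.
Proof. intros Hc Hs Ht. split; auto. apply B4_partials; auto. Qed.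

Lemma dirD_eq f v D : (forall z, is_dir f v z (D z)) -> forall z, dirD f v z = D z.
Proof. intros H z. apply is_derive_unique, H. Qed.

Lemma C2_B4_intro f : (forall z, continuous f z) ->
  (forall e, In e B3 -> exists D, (forall z, is_dx f e z (D z)) /\ C1_P4 D) ->
  (exists D, (forall z, is_dt f z (D z)) /\ C1_P4 D) -> C2 B4 f.
Proof.
  intros Hc Hs Ht. pose proof (B4_partials f C1_P4 Hs Ht) as G.
  split; [auto|split].
  - intros v Hv. destruct (G v Hv) as [D [HD [HDc _]]]. split.
    + intros z. exists (D z). apply HD.
    + intros z. apply continuous_ext with D; auto. intros; symmetry; apply dirD_eq; auto.
  - intros v w Hv Hw. destruct (G v Hv) as [D [HD [_ HD2]]].
    destruct (HD2 w Hw) as [D' [HD' HD'c]].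
    replace (dirD f v) with D by (symmetry; apply functional_extensionality, dirD_eq; auto).
    split.
    + intros z. exists (D' z). apply HD'.
    + intros z. apply continuous_ext with D'; auto. intros; symmetry; apply dirD_eq; auto.
Qed.

Lemma C1_P4_plus f g : C1_P4 f -> C1_P4 g -> C1_P4 (fun z => f z + g z).
Proof.
  intros [Hf1 Hf2] [Hg1 Hg2]. split.
  - intros z. apply continuous_Rplus; auto.
  - intros v Hv. destruct (Hf2 v Hv) as [D1 [H1 C1]], (Hg2 v Hv) as [D2 [H2 C2]].
    exists (fun z => D1 z + D2 z). split.
    + intros z. apply (is_derive_plus (V:=R_NormedModule) _ _ _ _ _ (H1 z) (H2 z)).
    + intros z. apply continuous_Rplus; auto.
Qed.

Lemma C1_P4_scal c f : C1_P4 f -> C1_P4 (fun z => c * f z).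
Proof.
  intros [Hf1 Hf2]. split.
  - intros z. apply continuous_Rmult; auto. apply continuous_Rconst.
  - intros v Hv. destruct (Hf2 v Hv) as [D1 [H1 C1]].
    exists (fun z => c * D1 z). split.
    + intros z. apply is_derive_scal, H1.
    + intros z. apply continuous_Rmult; auto. apply continuous_Rconst.
Qed.

Definition mono0 (x : R3) : R := 1.
Definition mono1 (u : R3) (x : R3) : R := dot x u.
Definition mono2 (e u : R3) (x : R3) : R := dot x e * dot x u.
Definition mono3 (e' e u : R3) (x : R3) : R := dot x e' * (dot x e * dot x u).

Lemma dot_deriv x e u : is_derive (fun h => dot (addv x h e) u) 0 (dot e u).
Proof.
  destruct x as [[a b] c], e as [[e1 e2] e3], u as [[u1 u2] u3].
  unfold dot, addv, c1, c2, c3; simpl. auto_derive; auto. ring.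
Qed.

Lemma mono1_bound u x : In u B3 -> Rabs (mono1 u x) <= norm3 x ^ 1.
Proof. intros. rewrite pow_1. apply Rabs_dot_B3_le; auto. Qed.

Lemma mono2_bound e u x : In e B3 -> In u B3 -> Rabs (mono2 e u x) <= norm3 x ^ 2.
Proof.
  intros. unfold mono2. rewrite Rabs_mult. simpl. rewrite Rmult_1_r.
  apply Rmult_le_compat; try apply Rabs_pos; apply Rabs_dot_B3_le; auto.
Qed.

Lemma mono3_bound e' e u x : In e' B3 -> In e B3 -> In u B3 ->
  Rabs (mono3 e' e u x) <= norm3 x ^ 3.
Proof.
  intros. unfold mono3. rewrite !Rabs_mult. simpl. rewrite Rmult_1_r.
  apply Rmult_le_compat; try apply Rabs_pos; try apply Rabs_dot_B3_le; auto.
  - apply Rmult_le_pos; apply Rabs_pos.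
  - apply Rmult_le_compat; try apply Rabs_pos; apply Rabs_dot_B3_le; auto.
Qed.

Lemma mono0_deriv x e : is_derive (fun h => mono0 (addv x h e)) 0 0.
Proof. unfold mono0. apply (is_derive_const (K:=R_AbsRing) (V:=R_NormedModule)). Qed.

Lemma mono1_deriv u x e : is_derive (fun h => mono1 u (addv x h e)) 0 (dot e u).
Proof. apply dot_deriv. Qed.

Lemma mono2_deriv e u x e' :
  is_derive (fun h => mono2 e u (addv x h e')) 0 (dot e' e * dot x u + dot x e * dot e' u).
Proof.
  pose proof (is_derive_mult _ _ _ _ _ (dot_deriv x e' e) (dot_deriv x e' u)
                ltac:(intros; apply Rmult_comm)) as H.
  simpl in H. rewrite addv0 in H. exact H.
Qed.

Lemma mono0_continuous x : continuous mono0 x.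
Proof. apply continuous_Rconst. Qed.

Lemma mono1_continuous u x : continuous (mono1 u) x.
Proof. apply continuous_dot. Qed.

Lemma mono2_continuous e u x : continuous (mono2 e u) x.
Proof. apply (continuous_Rmult (fun y => dot y e) (fun y => dot y u)); apply continuous_dot. Qed.

Lemma mono3_continuous e' e u x : continuous (mono3 e' e u) x.
Proof.
  apply (continuous_Rmult (fun y => dot y e') (fun y => dot y e * dot y u));
    [apply continuous_dot | apply mono2_continuous].
Qed.

(** * Continuity of radial functions across the axis *)

Ltac continuity_2d :=
  unfold Rdiv;
  repeat first
    [ apply continuity_2d_pt_const
    | apply continuity_2d_pt_id1
    | apply continuity_2d_pt_id2
    | apply continuity_2d_pt_plus
    | apply continuity_2d_pt_minus
    | apply continuity_2d_pt_mult
    | apply continuity_2d_pt_opp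
    | (apply continuity_2d_pt_inv;
       [|try (apply Rgt_not_eq, Rlt_gt; repeat apply Rmult_lt_0_compat; lra)]) ].

(* The bound |m x| <= |x|^k lets the factor u^k in the limit hypothesis absorb m. *)
Lemma radial_fun_continuous (g : R -> R -> R) (m : R3 -> R) k :
  (forall u t, 0 < u -> continuity_2d_pt g u t) -> (forall x, continuous m x) ->
  (forall x, Rabs (m x) <= norm3 x ^ k) ->
  (forall t, lim_r0 (fun u v => g u v * u ^ k) t 0) ->
  forall z, continuous (radial_fun g m (fun _ => 0)) z.
Proof.
  intros Hg Hm Hb Hl [x t]. destruct (Req_dec (norm3 x) 0) as [Hz|Hz].
  - apply norm3_eq0 in Hz; subst x.
    apply radial_fun_continuous_axis; [apply continuous_Rconst|].
    intros eps. destruct (Hl t eps) as [d Hd]. exists d. intros x s Hx Hs.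
    specialize (Hd _ _ Hx Hs). rewrite Rminus_0_r, Rabs_mult in *.
    eapply Rle_lt_trans; [|exact Hd]. apply Rmult_le_compat_l; [apply Rabs_pos|].
    rewrite (Rabs_pos_eq (norm3 x ^ k)); auto. apply pow_le, norm3_pos.
  - apply radial_fun_continuous_nz; auto. apply Hg. pose proof (norm3_pos x). lra.
Qed.

Lemma radial_fun_continuous_mono0 (g : R -> R -> R) (F0 : R -> R) :
  (forall u t, 0 < u -> continuity_2d_pt g u t) ->
  (forall t, lim_r0 g t (F0 t)) ->
  forall z, continuous (radial_fun g mono0 F0) z.
Proof.
  intros Hg Hl [x t]. destruct (Req_dec (norm3 x) 0) as [Hz|Hz].
  - apply norm3_eq0 in Hz; subst x.
    apply radial_fun_continuous_axis; [apply (lim_r0_continuous g F0 Hl)|].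
    intros eps. destruct (Hl t eps) as [d Hd]. exists d. intros x s Hx Hs.
    unfold mono0. rewrite Rmult_1_r. auto.
  - apply radial_fun_continuous_nz; auto using mono0_continuous.
    apply Hg. pose proof (norm3_pos x). lra.
Qed.

Definition quot_r (chi : R -> R -> R) (u t : R) : R := chi u t / u.

(* (1/r) d/dr (chi/r) when chir = chi_r. *)
Definition dquot_r (chi chir : R -> R -> R) (u t : R) : R := (u * chir u t - chi u t) / (u * u * u).

Lemma quot_r_continuity (chi : R -> R -> R) u t :
  0 < u -> continuity_2d_pt chi u t -> continuity_2d_pt (quot_r chi) u t.
Proof. intros Hu Hc. unfold quot_r. continuity_2d. exact Hc. Qed.

Lemma dquot_r_continuity (chi chir : R -> R -> R) u t : 0 < u ->
  continuity_2d_pt chi u t -> continuity_2d_pt chir u t ->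
  continuity_2d_pt (dquot_r chi chir) u t.
Proof. intros Hu Hc Hr. unfold dquot_r. continuity_2d; auto. Qed.

(* The component along u of (x, t) |-> chi(|x|, t) x / |x|. *)
Definition component (chi : R -> R -> R) (u : R3) : P4 -> R :=
  radial_fun (quot_r chi) (mono1 u) (fun _ => 0).

Definition component_dx (chi chir : R -> R -> R) (l : R -> R) (e u : R3) (z : P4) : R :=
  radial_fun (dquot_r chi chir) (mono2 e u) (fun _ => 0) z
  + dot e u * radial_fun (quot_r chi) mono0 l z.

Section Component.

Variables (chi chir : R -> R -> R) (l : R -> R).
Hypothesis chi_continuity : forall u t, 0 < u -> continuity_2d_pt chi u t.
Hypothesis chir_continuity : forall u t, 0 < u -> continuity_2d_pt chir u t.
Hypothesis chi_derive : forall u t, 0 < u -> is_derive (fun y => chi y t) u (chir u t).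
Hypothesis chi_lim : forall t, lim_r0 chi t 0.
Hypothesis chir_lim : forall t, lim_r0 chir t (l t).

Lemma component_continuous u : In u B3 -> forall z, continuous (component chi u) z.
Proof.
  intros Hu. apply radial_fun_continuous with 1%nat.
  - intros; apply quot_r_continuity; auto.
  - apply mono1_continuous.
  - intros; apply mono1_bound; auto.
  - intros t. apply lim_r0_ext with chi; auto. intros v s Hv. unfold quot_r. field. lra.
Qed.

Lemma component_dx_continuous e u : In e B3 -> In u B3 ->
  forall z, continuous (component_dx chi chir l e u) z.
Proof.
  intros He Hu z. unfold component_dx.
  apply (continuous_Rplus (fun z => radial_fun (dquot_r chi chir) (mono2 e u) (fun _ => 0) z)
                          (fun z => dot e u * radial_fun (quot_r chi) mono0 l z)).
  - apply radial_fun_continuous with 2%nat.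
    + intros; apply dquot_r_continuity; auto.
    + apply mono2_continuous.
    + intros; apply mono2_bound; auto.
    + intros t. replace 0 with (l t - l t) by ring.
      apply lim_r0_ext with (fun v s => chir v s - chi v s / v).
      * intros v s Hv. unfold dquot_r. simpl. field. lra.
      * apply lim_r0_minus; auto. apply lim_r0_div_r with chir; auto.
  - apply (continuous_Rmult (fun _ => dot e u) (fun z => radial_fun (quot_r chi) mono0 l z));
      [apply continuous_Rconst|].
    apply radial_fun_continuous_mono0.
    + intros; apply quot_r_continuity; auto.
    + intros t. apply lim_r0_div_r with chir; auto.
Qed.

Lemma component_is_dx_off_axis e u z : norm3 (fst z) <> 0 ->
  is_dx (component chi u) e z (component_dx chi chir l e u z).
Proof.
  destruct z as [x t]. simpl. intros Hz.
  assert (Hp : 0 < norm3 x) by (pose proof (norm3_pos x); lra).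
  assert (Hq : is_derive (fun y => quot_r chi y t) (norm3 x)
                 ((norm3 x * chir (norm3 x) t - chi (norm3 x) t) / (norm3 x * norm3 x))).
  { unfold quot_r. auto_derive.
    - repeat split; try lra. eexists; apply chi_derive; lra.
    - rewrite (is_derive_unique _ _ _ (chi_derive _ _ Hp)). field. lra. }
  eapply is_derive_eq; [exact (radial_fun_dx _ _ _ x t e _ _ Hz Hq (mono1_deriv u x e))|].
  unfold component_dx. rewrite !radial_fun_nz by auto.
  unfold dquot_r, quot_r, mono2, mono1, mono0. field. lra.
Qed.

Lemma component_is_dx e u : In e B3 -> In u B3 ->
  forall z, is_dx (component chi u) e z (component_dx chi chir l e u z).
Proof.
  intros He Hu [x t]. destruct (Req_dec (norm3 x) 0) as [Hz|Hz].
  - apply norm3_eq0 in Hz; subst x.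
    apply is_dx_axis; auto using component_continuous, component_dx_continuous.
    intros z. apply component_is_dx_off_axis.
  - now apply component_is_dx_off_axis.
Qed.

End Component.

Lemma component_is_dt (chi chit : R -> R -> R) u :
  (forall v t, 0 < v -> is_derive (fun s => chi v s) t (chit v t)) ->
  forall z, is_dt (component chi u) z (component chit u z).
Proof.
  intros Hd [x t]. unfold component. destruct (Req_dec (norm3 x) 0) as [Hz|Hz].
  - rewrite radial_fun_axis by auto. apply radial_fun_dt_axis; auto.
    apply (is_derive_const (K:=R_AbsRing) (V:=R_NormedModule)).
  - rewrite radial_fun_nz by auto. apply radial_fun_dt; auto. unfold quot_r.
    assert (Hp : 0 < norm3 x) by (pose proof (norm3_pos x); lra).
    auto_derive.
    + repeat split; try lra. eexists; apply Hd; lra.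
    + rewrite (is_derive_unique _ _ _ (Hd _ _ Hp)). field. lra.
Qed.

(** * The components of U are C^2 *)

Section Profile.

Variables psi Pr Pt Prr Prt Ptr Ptt : R -> R -> R.
Variables a b : R -> R.

Hypothesis partials : forall u t, 0 < u ->
  is_derive (fun y => psi y t) u (Pr u t) /\ is_derive (fun s => psi u s) t (Pt u t) /\
  is_derive (fun y => Pr y t) u (Prr u t) /\ is_derive (fun s => Pr u s) t (Prt u t) /\
  is_derive (fun y => Pt y t) u (Ptr u t) /\ is_derive (fun s => Pt u s) t (Ptt u t).
Hypothesis partials_continuity : forall g, In g [psi; Pr; Pt; Prr; Prt; Ptr; Ptt] ->
  forall u t, 0 < u -> continuity_2d_pt g u t.
Hypothesis psi_lim : forall t, lim_r0 psi t 0.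
Hypothesis Pt_lim : forall t, lim_r0 Pt t 0.
Hypothesis Ptt_lim : forall t, lim_r0 Ptt t 0.
Hypothesis Pr_lim : forall t, lim_r0 Pr t (a t).
Hypothesis Ptr_lim : forall t, lim_r0 Ptr t (b t).
Hypothesis Prt_lim : forall t, lim_r0 Prt t (b t).
Hypothesis Prr_lim : forall t, lim_r0 Prr t 0.
Hypothesis a_derive : forall t, is_derive a t (b t).

Lemma psi_dr u t : 0 < u -> is_derive (fun y => psi y t) u (Pr u t).
Proof. intros Hu. apply (partials u t Hu). Qed.
Lemma psi_dt u t : 0 < u -> is_derive (fun s => psi u s) t (Pt u t).
Proof. intros Hu. apply (partials u t Hu). Qed.
Lemma Pr_dr u t : 0 < u -> is_derive (fun y => Pr y t) u (Prr u t).
Proof. intros Hu. apply (partials u t Hu). Qed.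
Lemma Pr_dt u t : 0 < u -> is_derive (fun s => Pr u s) t (Prt u t).
Proof. intros Hu. apply (partials u t Hu). Qed.
Lemma Pt_dr u t : 0 < u -> is_derive (fun y => Pt y t) u (Ptr u t).
Proof. intros Hu. apply (partials u t Hu). Qed.
Lemma Pt_dt u t : 0 < u -> is_derive (fun s => Pt u s) t (Ptt u t).
Proof. intros Hu. apply (partials u t Hu). Qed.

Local Hint Resolve psi_dr psi_dt Pr_dr Pr_dt Pt_dr Pt_dt : core.
Local Hint Extern 1 (continuity_2d_pt _ _ _) =>
  apply partials_continuity; [simpl; tauto | assumption] : core.

Ltac ex_partial := match goal with
 | |- ex_derive (fun x => psi x ?t) ?u => exists (Pr u t); apply psi_dr; lra
 | |- ex_derive (fun x => Pr x ?t) ?u => exists (Prr u t); apply Pr_dr; lra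
 | |- ex_derive (fun x => Pt x ?t) ?u => exists (Ptr u t); apply Pt_dr; lra
 | |- ex_derive (fun x => psi ?u x) ?t => exists (Pt u t); apply psi_dt; lra
 | |- ex_derive (fun x => Pr ?u x) ?t => exists (Prt u t); apply Pr_dt; lra
 | |- ex_derive (fun x => Pt ?u x) ?t => exists (Ptt u t); apply Pt_dt; lra
 end.
Ltac side_conditions := repeat match goal with |- _ /\ _ => split end;
  try exact I; try ex_partial; try lra;
  try (repeat apply Rmult_integral_contrapositive_currified; lra).
Ltac rewrite_partials := repeat match goal with
 | |- context [Derive (fun x => psi x ?t) ?u] =>
     rewrite (Derive_of_is_derive (fun x => psi x t) u (Pr u t)) by (apply psi_dr; lra)
 | |- context [Derive (fun x => Pr x ?t) ?u] =>
     rewrite (Derive_of_is_derive (fun x => Pr x t) u (Prr u t)) by (apply Pr_dr; lra)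
 | |- context [Derive (fun x => Pt x ?t) ?u] =>
     rewrite (Derive_of_is_derive (fun x => Pt x t) u (Ptr u t)) by (apply Pt_dr; lra)
 | |- context [Derive (fun x => psi ?u x) ?t] =>
     rewrite (Derive_of_is_derive (fun x => psi u x) t (Pt u t)) by (apply psi_dt; lra)
 | |- context [Derive (fun x => Pr ?u x) ?t] =>
     rewrite (Derive_of_is_derive (fun x => Pr u x) t (Prt u t)) by (apply Pr_dt; lra)
 | |- context [Derive (fun x => Pt ?u x) ?t] =>
     rewrite (Derive_of_is_derive (fun x => Pt u x) t (Ptt u t)) by (apply Pt_dt; lra)
 end.

Definition A := dquot_r psi Pr.
Definition A_r (u t : R) : R :=
  (u * u * Prr u t - 3 * (u * Pr u t - psi u t)) / (u * u * u * u).

(* psi(0) = 0 and psi_rr(0) = 0 make r A = (r psi_r - psi)/r^2 vanish on the axis. *)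
Lemma lim_r0_A_mul_r t : lim_r0 (fun u v => (u * Pr u v - psi u v) / (u * u)) t 0.
Proof.
  apply lim_r0_div_r2 with (fun u v => u * Prr u v).
  - intros u s Hu. auto_derive; [side_conditions|]. rewrite_partials. ring.
  - intros s. replace 0 with (0 * a s - 0) by ring. apply lim_r0_minus; auto.
    apply lim_r0_mult; auto. apply lim_r0_fst.
  - apply lim_r0_ext with Prr; auto. intros u v Hu. field. lra.
Qed.

Lemma A_mono1_continuous e : In e B3 -> forall z, continuous (radial_fun A (mono1 e) (fun _ => 0)) z.
Proof.
  intros He. apply radial_fun_continuous with 1%nat.
  - intros; apply dquot_r_continuity; auto.
  - apply mono1_continuous.
  - intros; apply mono1_bound; auto.
  - intros t. apply lim_r0_ext with (2 := lim_r0_A_mul_r t).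
    intros u v Hu. unfold A, dquot_r. field. lra.
Qed.

Lemma A_mono2_continuous e u0 : In e B3 -> In u0 B3 ->
  forall z, continuous (radial_fun A (mono2 e u0) (fun _ => 0)) z.
Proof.
  intros He Hu0. apply radial_fun_continuous with 2%nat.
  - intros; apply dquot_r_continuity; auto.
  - apply mono2_continuous.
  - intros; apply mono2_bound; auto.
  - intros t. replace 0 with (a t - a t) by ring.
    apply lim_r0_ext with (fun u v => Pr u v - psi u v / u).
    + intros u v Hu. unfold A, dquot_r. simpl. field. lra.
    + apply lim_r0_minus; auto. apply lim_r0_div_r with Pr; auto.
Qed.

Definition A_mono2_dx (e u0 e' : R3) (z : P4) : R :=
  radial_fun (quot_r A_r) (mono3 e' e u0) (fun _ => 0) z +
  (dot e' e * radial_fun A (mono1 u0) (fun _ => 0) z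
   + dot e' u0 * radial_fun A (mono1 e) (fun _ => 0) z).

Lemma A_mono2_dx_continuous e u0 e' : In e B3 -> In u0 B3 -> In e' B3 ->
  forall z, continuous (A_mono2_dx e u0 e') z.
Proof.
  intros He Hu0 He' z. unfold A_mono2_dx.
  apply (continuous_Rplus (fun z => radial_fun (quot_r A_r) (mono3 e' e u0) (fun _ => 0) z)
    (fun z => dot e' e * radial_fun A (mono1 u0) (fun _ => 0) z
              + dot e' u0 * radial_fun A (mono1 e) (fun _ => 0) z)).
  - apply radial_fun_continuous with 3%nat.
    + intros u t Hu. apply quot_r_continuity; auto. unfold A_r. continuity_2d; auto.
    + apply mono3_continuous.
    + intros; apply mono3_bound; auto.
    + intros t. replace 0 with (0 - 3 * 0) by ring.
      apply lim_r0_ext with (fun u v => Prr u v - 3 * ((u * Pr u v - psi u v) / (u * u))).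
      * intros u v Hu. unfold quot_r, A_r. simpl. field. lra.
      * apply lim_r0_minus; auto. apply lim_r0_scal, lim_r0_A_mul_r.
  - apply (continuous_Rplus (fun z => dot e' e * radial_fun A (mono1 u0) (fun _ => 0) z)
                            (fun z => dot e' u0 * radial_fun A (mono1 e) (fun _ => 0) z));
      apply continuous_Rmult; auto using continuous_Rconst, A_mono1_continuous.
Qed.

Lemma A_mono2_is_dx e u0 e' : In e B3 -> In u0 B3 -> In e' B3 ->
  forall z, is_dx (radial_fun A (mono2 e u0) (fun _ => 0)) e' z (A_mono2_dx e u0 e' z).
Proof.
  intros He Hu0 He'.
  assert (Hoff : forall z, norm3 (fst z) <> 0 ->
            is_dx (radial_fun A (mono2 e u0) (fun _ => 0)) e' z (A_mono2_dx e u0 e' z)).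
  { intros [x t] Hz. simpl in Hz.
    assert (Hp : 0 < norm3 x) by (pose proof (norm3_pos x); lra).
    assert (HA : is_derive (fun y => A y t) (norm3 x) (A_r (norm3 x) t)).
    { unfold A, dquot_r, A_r. auto_derive; [side_conditions|]. rewrite_partials. field. lra. }
    eapply is_derive_eq; [exact (radial_fun_dx _ _ _ x t e' _ _ Hz HA (mono2_deriv e u0 x e'))|].
    unfold A_mono2_dx. rewrite !radial_fun_nz by auto.
    unfold A, dquot_r, quot_r, A_r, mono3, mono2, mono1. field. lra. }
  intros [x t]. destruct (Req_dec (norm3 x) 0) as [Hz|Hz].
  - apply norm3_eq0 in Hz; subst x.
    apply is_dx_axis; auto using A_mono2_continuous, A_mono2_dx_continuous.
  - apply Hoff; auto.
Qed.

Lemma A_mono2_is_dt e u0 :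
  forall z, is_dt (radial_fun A (mono2 e u0) (fun _ => 0)) z
                  (radial_fun (dquot_r Pt Prt) (mono2 e u0) (fun _ => 0) z).
Proof.
  intros [x t]. destruct (Req_dec (norm3 x) 0) as [Hz|Hz].
  - rewrite radial_fun_axis by auto. apply radial_fun_dt_axis; auto.
    apply (is_derive_const (K:=R_AbsRing) (V:=R_NormedModule)).
  - rewrite radial_fun_nz by auto. apply radial_fun_dt; auto.
    assert (Hp : 0 < norm3 x) by (pose proof (norm3_pos x); lra).
    unfold A, dquot_r. auto_derive; [side_conditions|]. rewrite_partials. field. lra.
Qed.

Lemma A_mono2_dt_continuous e u0 : In e B3 -> In u0 B3 ->
  forall z, continuous (radial_fun (dquot_r Pt Prt) (mono2 e u0) (fun _ => 0)) z.
Proof.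
  intros He Hu0. apply radial_fun_continuous with 2%nat.
  - intros; apply dquot_r_continuity; auto.
  - apply mono2_continuous.
  - intros; apply mono2_bound; auto.
  - intros t. replace 0 with (b t - b t) by ring.
    apply lim_r0_ext with (fun u v => Prt u v - Pt u v / u).
    + intros u v Hu. unfold dquot_r. simpl. field. lra.
    + apply lim_r0_minus; auto. apply lim_r0_div_r with Ptr; auto.
Qed.

Lemma C1_A_mono2 e u0 : In e B3 -> In u0 B3 -> C1_P4 (radial_fun A (mono2 e u0) (fun _ => 0)).
Proof.
  intros He Hu0. apply C1_P4_intro.
  - apply A_mono2_continuous; auto.
  - intros e' He'. exists (A_mono2_dx e u0 e').
    split; [apply A_mono2_is_dx | apply A_mono2_dx_continuous]; auto.
  - exists (radial_fun (dquot_r Pt Prt) (mono2 e u0) (fun _ => 0)).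
    split; [apply A_mono2_is_dt | apply A_mono2_dt_continuous; auto].
Qed.

Lemma quot_psi_continuous : forall z, continuous (radial_fun (quot_r psi) mono0 a) z.
Proof.
  apply radial_fun_continuous_mono0.
  - intros; apply quot_r_continuity; auto.
  - intros t. apply lim_r0_div_r with Pr; auto.
Qed.

Lemma quot_psi_is_dx e' : In e' B3 ->
  forall z, is_dx (radial_fun (quot_r psi) mono0 a) e' z (radial_fun A (mono1 e') (fun _ => 0) z).
Proof.
  intros He'.
  assert (Hoff : forall z, norm3 (fst z) <> 0 ->
            is_dx (radial_fun (quot_r psi) mono0 a) e' z (radial_fun A (mono1 e') (fun _ => 0) z)).
  { intros [x t] Hz. simpl in Hz.
    assert (Hp : 0 < norm3 x) by (pose proof (norm3_pos x); lra).
    assert (Hq : is_derive (fun y => quot_r psi y t) (norm3 x)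
                   ((norm3 x * Pr (norm3 x) t - psi (norm3 x) t) / (norm3 x * norm3 x))).
    { unfold quot_r. auto_derive; [side_conditions|]. rewrite_partials. field. lra. }
    eapply is_derive_eq; [exact (radial_fun_dx _ _ _ x t e' _ _ Hz Hq (mono0_deriv x e'))|].
    rewrite !radial_fun_nz by auto. unfold A, dquot_r, quot_r, mono0, mono1. field. lra. }
  intros [x t]. destruct (Req_dec (norm3 x) 0) as [Hz|Hz].
  - apply norm3_eq0 in Hz; subst x.
    apply is_dx_axis; auto using quot_psi_continuous, A_mono1_continuous.
  - apply Hoff; auto.
Qed.

Lemma quot_psi_is_dt : forall z, is_dt (radial_fun (quot_r psi) mono0 a) z (radial_fun (quot_r Pt) mono0 b z).
Proof.
  intros [x t]. destruct (Req_dec (norm3 x) 0) as [Hz|Hz].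
  - rewrite radial_fun_axis by auto. apply radial_fun_dt_axis; auto.
  - rewrite radial_fun_nz by auto. apply radial_fun_dt; auto.
    assert (Hp : 0 < norm3 x) by (pose proof (norm3_pos x); lra).
    unfold quot_r. auto_derive; [side_conditions|]. rewrite_partials. field. lra.
Qed.

Lemma C1_quot_psi : C1_P4 (radial_fun (quot_r psi) mono0 a).
Proof.
  apply C1_P4_intro.
  - apply quot_psi_continuous.
  - intros e' He'. exists (radial_fun A (mono1 e') (fun _ => 0)).
    split; [apply quot_psi_is_dx | apply A_mono1_continuous]; auto.
  - exists (radial_fun (quot_r Pt) mono0 b). split; [apply quot_psi_is_dt|].
    apply radial_fun_continuous_mono0.
    + intros; apply quot_r_continuity; auto.
    + intros t. apply lim_r0_div_r with Ptr; auto.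
Qed.

Lemma C1_component_dt u0 : In u0 B3 -> C1_P4 (component Pt u0).
Proof.
  intros Hu0. apply C1_P4_intro.
  - apply component_continuous; auto.
  - intros e He. exists (component_dx Pt Ptr b e u0).
    split; [apply component_is_dx | apply component_dx_continuous]; auto.
  - exists (component Ptt u0).
    split; [apply component_is_dt | apply component_continuous]; auto.
Qed.

Lemma component_C2 u0 : In u0 B3 -> C2 B4 (component psi u0).
Proof.
  intros Hu0. apply C2_B4_intro.
  - apply component_continuous; auto.
  - intros e He. exists (component_dx psi Pr a e u0). split; [apply component_is_dx; auto|].
    apply (C1_P4_plus (radial_fun A (mono2 e u0) (fun _ => 0))
                      (fun z => dot e u0 * radial_fun (quot_r psi) mono0 a z)).
    + apply C1_A_mono2; auto.
    + apply C1_P4_scal, C1_quot_psi.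
  - exists (component Pt u0).
    split; [apply component_is_dt | apply C1_component_dt]; auto.
Qed.

End Profile.

Definition e1 : R3 := (1,0,0).
Definition e2 : R3 := (0,1,0).
Definition e3 : R3 := (0,0,1).

Lemma e1_B3 : In e1 B3. Proof. simpl; auto. Qed.
Lemma e2_B3 : In e2 B3. Proof. simpl; auto. Qed.
Lemma e3_B3 : In e3 B3. Proof. simpl; auto. Qed.

Lemma radial_field_components chi x t :
  radial_field chi x t = (component chi e1 (x,t), component chi e2 (x,t), component chi e3 (x,t)).
Proof.
  unfold radial_field, component, radial_fun, quot_r, mono1, dot, e1, e2, e3. cbn [fst snd].
  destruct (Req_EM_T (norm3 x) 0); [reflexivity|].
  destruct x as [[x1 x2] x3]. unfold c1, c2, c3; cbn [fst snd]. f_equal; [f_equal|]; ring.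
Qed.

Lemma F1_radial_field chi : F1 (radial_field chi) = fun x t => component chi e1 (x,t).
Proof.
  do 2 (apply functional_extensionality; intro). unfold F1. now rewrite radial_field_components.
Qed.
Lemma F2_radial_field chi : F2 (radial_field chi) = fun x t => component chi e2 (x,t).
Proof.
  do 2 (apply functional_extensionality; intro). unfold F2. now rewrite radial_field_components.
Qed.
Lemma F3_radial_field chi : F3 (radial_field chi) = fun x t => component chi e3 (x,t).
Proof.
  do 2 (apply functional_extensionality; intro). unfold F3. now rewrite radial_field_components.
Qed.

Lemma px1_of_is_dx (G : P4 -> R) x t l : is_dx G e1 (x,t) l -> px1 (fun x t => G (x,t)) x t = l.
Proof.
  unfold is_dx, px1; simpl. intros H. apply is_derive_unique.
  apply (is_derive_shift (fun y => G (y, c2 x, c3 x, t))).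
  eapply is_derive_ext; [|exact H]. intros h. simpl. do 2 f_equal.
  destruct x as [[a b] c]; unfold addv, e1, c1, c2, c3; simpl. f_equal; [f_equal|]; ring.
Qed.
Lemma px2_of_is_dx (G : P4 -> R) x t l : is_dx G e2 (x,t) l -> px2 (fun x t => G (x,t)) x t = l.
Proof.
  unfold is_dx, px2; simpl. intros H. apply is_derive_unique.
  apply (is_derive_shift (fun y => G (c1 x, y, c3 x, t))).
  eapply is_derive_ext; [|exact H]. intros h. simpl. do 2 f_equal.
  destruct x as [[a b] c]; unfold addv, e2, c1, c2, c3; simpl. f_equal; [f_equal|]; ring.
Qed.
Lemma px3_of_is_dx (G : P4 -> R) x t l : is_dx G e3 (x,t) l -> px3 (fun x t => G (x,t)) x t = l.
Proof.
  unfold is_dx, px3; simpl. intros H. apply is_derive_unique.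
  apply (is_derive_shift (fun y => G (c1 x, c2 x, y, t))).
  eapply is_derive_ext; [|exact H]. intros h. simpl. do 2 f_equal.
  destruct x as [[a b] c]; unfold addv, e3, c1, c2, c3; simpl. f_equal; [f_equal|]; ring.
Qed.

Lemma Derive_t_of_is_dt (G : P4 -> R) x t l : is_dt G (x,t) l -> Derive (fun u => G (x,u)) t = l.
Proof. unfold is_dt; simpl. intros H. apply is_derive_unique, (is_derive_shift (fun u => G (x,u))), H. Qed.

Lemma triple_eq (a1 a2 a3 b1 b2 b3 : R) : a1 = b1 -> a2 = b2 -> a3 = b3 -> (a1, a2, a3) = (b1, b2, b3).
Proof. intros -> -> ->; reflexivity. Qed.

(* The x-Jacobian of U, (A x_i x_j + delta_ij W) with W = chi/r, is symmetric. *)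
Lemma curl_radial_field (chi chir : R -> R -> R) (l : R -> R) :
  (forall u t, 0 < u -> continuity_2d_pt chi u t) ->
  (forall u t, 0 < u -> continuity_2d_pt chir u t) ->
  (forall u t, 0 < u -> is_derive (fun y => chi y t) u (chir u t)) ->
  (forall t, lim_r0 chi t 0) -> (forall t, lim_r0 chir t (l t)) ->
  curl (radial_field chi) = fun _ _ => (0,0,0).
Proof.
  intros Hc Hcr Hd Hl Hlr.
  assert (Hdx : forall e u z, In e B3 -> In u B3 ->
            is_dx (component chi u) e z (component_dx chi chir l e u z))
    by (intros; apply component_is_dx; auto).
  do 2 (apply functional_extensionality; intro). rename x0 into t.
  unfold curl. rewrite F1_radial_field, F2_radial_field, F3_radial_field.
  rewrite (px2_of_is_dx _ x t _ (Hdx e2 e3 (x,t) e2_B3 e3_B3)),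
          (px3_of_is_dx _ x t _ (Hdx e3 e2 (x,t) e3_B3 e2_B3)),
          (px3_of_is_dx _ x t _ (Hdx e3 e1 (x,t) e3_B3 e1_B3)),
          (px1_of_is_dx _ x t _ (Hdx e1 e3 (x,t) e1_B3 e3_B3)),
          (px1_of_is_dx _ x t _ (Hdx e1 e2 (x,t) e1_B3 e2_B3)),
          (px2_of_is_dx _ x t _ (Hdx e2 e1 (x,t) e2_B3 e1_B3)).
  unfold component_dx, radial_fun, mono2, dot, e1, e2, e3. cbn [fst snd].
  destruct (Req_EM_T (norm3 x) 0); unfold c1, c2, c3; cbn [fst snd]; apply triple_eq; ring.
Qed.

Lemma curl_zero : curl (fun _ _ => (0,0,0)) = fun _ _ => (0,0,0).
Proof.
  do 2 (apply functional_extensionality; intro).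
  unfold curl, px1, px2, px3, F1, F2, F3. cbn [c1 c2 c3 fst snd].
  rewrite !Derive_const. apply triple_eq; ring.
Qed.

Lemma dtt_radial_field (chi chit chitt : R -> R -> R) :
  (forall u t, 0 < u -> is_derive (fun s => chi u s) t (chit u t)) ->
  (forall u t, 0 < u -> is_derive (fun s => chit u s) t (chitt u t)) ->
  forall x t, dtt (radial_field chi) x t = radial_field chitt x t.
Proof.
  intros Hd Hdt x t.
  assert (Htt : forall u, ptt (fun x t => component chi u (x,t)) x t = component chitt u (x,t)).
  { intros u. unfold ptt.
    rewrite (Derive_ext _ (fun s => component chit u (x,s))).
    - apply Derive_t_of_is_dt, component_is_dt; auto.
    - intros s. apply Derive_t_of_is_dt, component_is_dt; auto. }
  unfold dtt. rewrite F1_radial_field, F2_radial_field, F3_radial_field, !Htt.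
  symmetry; apply radial_field_components.
Qed.

Lemma norm3_radial_field psi x t : psi 0 t = 0 ->
  norm3 (radial_field psi x t) = Rabs (psi (norm3 x) t).
Proof.
  intros H0. unfold radial_field. destruct (Req_EM_T (norm3 x) 0) as [Hz|Hz].
  - rewrite Hz, H0, Rabs_R0. apply norm3_0.
  - rewrite norm3_scal. unfold Rdiv.
    rewrite Rabs_mult, Rabs_inv, (Rabs_pos_eq (norm3 x)) by apply norm3_pos.
    field. auto.
Qed.

(** * Equivalence of the equations *)

Section Equations.

Variables (s q V : R3 -> R) (st qt Vt : R -> R) (p sigma : R) (psi : R -> R -> R).
Hypothesis s_radial : forall x, s x = st (norm3 x).
Hypothesis q_radial : forall x, q x = qt (norm3 x).
Hypothesis V_radial : forall x, V x = Vt (norm3 x).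
Hypothesis psi_axis : forall t, psi 0 t = 0.
Hypothesis curl_curl_U : forall x t, curl (curl (radial_field psi)) x t = (0,0,0).
Hypothesis dtt_U : forall x t, dtt (radial_field psi) x t = radial_field (dt (dt psi)) x t.

Let ode_lhs (r t : R) : R :=
  st r * dt (dt psi) r t + qt r * psi r t
  + sigma * Vt r * (rpow (Rabs (psi r t)) (p - 1) * psi r t).

Lemma pde_components x t : norm3 x <> 0 ->
  let a := dtt (radial_field psi) x t in
  let b := curl (curl (radial_field psi)) x t in
  let u := radial_field psi x t in
  let k := sigma * V x * rpow (norm3 u) (p - 1) in
  s x * c1 a + c1 b + q x * c1 u + k * c1 u = c1 x / norm3 x * ode_lhs (norm3 x) t /\
  s x * c2 a + c2 b + q x * c2 u + k * c2 u = c2 x / norm3 x * ode_lhs (norm3 x) t /\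
  s x * c3 a + c3 b + q x * c3 u + k * c3 u = c3 x / norm3 x * ode_lhs (norm3 x) t.
Proof.
  intros Hz. cbv zeta.
  rewrite curl_curl_U, dtt_U, norm3_radial_field, s_radial, q_radial, V_radial by auto.
  unfold radial_field, ode_lhs. destruct Req_EM_T as [|_]; [contradiction|].
  cbn [c1 c2 c3 fst snd].
  repeat split; field; auto.
Qed.

Lemma ode_of_pde : solves_pde s q V p sigma (radial_field psi) -> solves_ode st qt Vt p sigma psi.
Proof.
  intros HP r t Hr. fold (ode_lhs r t).
  destruct (Req_dec r 0) as [->|Hr0].
  - assert (Hdtt : dt (dt psi) 0 t = 0).
    { unfold dt. rewrite (Derive_ext _ (fun _ => 0)); [apply Derive_const|].
      intros y. rewrite (Derive_ext _ (fun _ => 0)); [apply Derive_const|]. apply psi_axis. }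
    unfold ode_lhs. rewrite psi_axis, Hdtt. ring.
  - assert (Hn : norm3 (r,0,0) = r) by (apply norm3_axis; lra).
    destruct (pde_components (r,0,0) t ltac:(lra)) as [H1 _].
    specialize (HP (r,0,0) t). cbv zeta in HP, H1. destruct HP as [HP1 _].
    rewrite HP1, Hn in H1. unfold c1 in H1; cbn [fst snd] in H1.
    replace (r / r) with 1 in H1 by (field; lra). lra.
Qed.

Lemma pde_of_ode : solves_ode st qt Vt p sigma psi -> solves_pde s q V p sigma (radial_field psi).
Proof.
  intros HO x t. destruct (Req_dec (norm3 x) 0) as [Hz|Hz].
  - cbv zeta. rewrite curl_curl_U, dtt_U.
    unfold radial_field. destruct Req_EM_T; [|contradiction].
    cbn [c1 c2 c3 fst snd]. repeat split; ring.
  - pose proof (HO (norm3 x) t (norm3_pos x)) as H. fold (ode_lhs (norm3 x) t) in H.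
    destruct (pde_components x t Hz) as (H1 & H2 & H3).
    rewrite H in H1, H2, H3. rewrite Rmult_0_r in H1, H2, H3. auto.
Qed.

Lemma pde_iff_ode :
  solves_pde s q V p sigma (radial_field psi) <-> solves_ode st qt Vt p sigma psi.
Proof. split; [apply ode_of_pde | apply pde_of_ode]. Qed.

End Equations.

(** * Consequences of psi being C^2 up to the axis *)

Section HalfPlane.

Variable psi : R -> R -> R.
Hypothesis psi_C2 : C2_halfplane psi.
Hypothesis psi_axis : forall t, psi 0 t = 0.
Hypothesis drr_psi_axis : forall t, filterlim (uncurry (dr (dr psi)))
  (within (fun z : R * R => 0 < fst z) (locally (0, t))) (locally 0).

Lemma C2_halfplane_partials : forall u t, 0 < u ->
  is_derive (fun y => psi y t) u (dr psi u t) /\ is_derive (fun s => psi u s) t (dt psi u t) /\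
  is_derive (fun y => dr psi y t) u (dr (dr psi) u t) /\
  is_derive (fun s => dr psi u s) t (dt (dr psi) u t) /\
  is_derive (fun y => dt psi y t) u (dr (dt psi) u t) /\
  is_derive (fun s => dt psi u s) t (dt (dt psi) u t).
Proof.
  intros u t Hu. destruct psi_C2 as [Hex _].
  destruct (Hex u t Hu) as (H1 & H2 & H3 & H4 & H5 & H6).
  repeat split; apply Derive_correct; assumption.
Qed.

Lemma C2_halfplane_continuity : forall g, In g (derivs2 psi) ->
  forall u t, 0 < u -> continuity_2d_pt g u t.
Proof.
  intros g Hg u t Hu. apply continuity_2d_pt_filterlim.
  destruct psi_C2 as (_ & Hc & _). apply (Hc g Hg u t Hu).
Qed.

Lemma C2_halfplane_lim : forall g, In g (derivs2 psi) -> exists L, forall t, lim_r0 g t (L t).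
Proof.
  intros g Hg. destruct psi_C2 as (_ & _ & Hl & _).
  assert (H : forall t, exists l, lim_r0 g t l).
  { intros t. destruct (Hl g Hg t) as [l Hlt]. exists l.
    apply (lim_r0_of_filterlim _ g t l (fun _ H => H) Hlt). }
  exists (fun t => proj1_sig (constructive_indefinite_description _ (H t))).
  intros t. exact (proj2_sig (constructive_indefinite_description _ (H t))).
Qed.

Lemma C2_halfplane_lim_psi t : lim_r0 psi t 0.
Proof.
  destruct psi_C2 as (_ & _ & _ & Hl). rewrite <- (psi_axis t).
  apply (lim_r0_of_filterlim (fun z => 0 <= fst z)); [intros z Hz; simpl; lra | apply Hl].
Qed.

Lemma C2_halfplane_lim_dt t : lim_r0 (dt psi) t 0.
Proof.
  apply (lim_r0_dt_zero psi); [apply C2_halfplane_partials | apply C2_halfplane_lim_psi|].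
  destruct (C2_halfplane_lim (dt psi)) as [L HL]; [simpl; tauto | eauto].
Qed.

Lemma C2_halfplane_lim_dtt t : lim_r0 (dt (dt psi)) t 0.
Proof.
  apply (lim_r0_dt_zero (dt psi)); [apply C2_halfplane_partials | apply C2_halfplane_lim_dt|].
  destruct (C2_halfplane_lim (dt (dt psi))) as [L HL]; [simpl; tauto | eauto].
Qed.

Lemma C2_halfplane_dr_dt u t : 0 < u -> dr (dt psi) u t = dt (dr psi) u t.
Proof.
  intros Hu. destruct psi_C2 as [Hex _]. apply Schwarz.
  - assert (Hu2 : 0 < u / 2) by lra. exists (mkposreal _ Hu2). intros u' v Hu' Hv. simpl in Hu'.
    assert (Hpos : 0 < u') by (pose proof (Rabs_def2 _ _ Hu'); lra).
    destruct (Hex u' v Hpos) as (E1 & E2 & E3 & E4 & E5 & E6). repeat split; assumption.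
  - apply C2_halfplane_continuity; [simpl; tauto | lra].
  - apply C2_halfplane_continuity; [simpl; tauto | lra].
Qed.

Lemma C2_halfplane_component_C2 u : In u B3 -> C2 B4 (component psi u).
Proof.
  intros Hu.
  destruct (C2_halfplane_lim (dr psi)) as [a Ha]; [simpl; tauto|].
  destruct (C2_halfplane_lim (dr (dt psi))) as [b Hb]; [simpl; tauto|].
  assert (Hb' : forall t, lim_r0 (dt (dr psi)) t (b t))
    by (intros t; apply lim_r0_ext with (dr (dt psi)); auto using C2_halfplane_dr_dt).
  apply (component_C2 psi (dr psi) (dt psi) (dr (dr psi)) (dt (dr psi)) (dr (dt psi))
           (dt (dt psi)) a b); auto.
  - exact C2_halfplane_partials.
  - exact C2_halfplane_continuity.
  - exact C2_halfplane_lim_psi.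
  - exact C2_halfplane_lim_dt.
  - exact C2_halfplane_lim_dtt.
  - intros t. apply (lim_r0_of_filterlim _ _ t 0 (fun _ H => H)), drr_psi_axis.
  - intros t. apply (lim_r0_is_derive (dr psi) (dt (dr psi))); auto.
    intros v s Hv. apply (C2_halfplane_partials v s Hv).
Qed.

Lemma C2_halfplane_radial_field_C2 : C2_VF (radial_field psi).
Proof.
  unfold C2_VF.
  split; [|split];
    [ replace (fun z : P4 => c1 (radial_field psi (fst z) (snd z))) with (component psi e1)
    | replace (fun z : P4 => c2 (radial_field psi (fst z) (snd z))) with (component psi e2)
    | replace (fun z : P4 => c3 (radial_field psi (fst z) (snd z))) with (component psi e3) ];
    auto using C2_halfplane_component_C2, e1_B3, e2_B3, e3_B3;
    apply functional_extensionality; intros [x t]; now rewrite radial_field_components.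
Qed.

Lemma C2_halfplane_curl_curl x t : curl (curl (radial_field psi)) x t = (0,0,0).
Proof.
  destruct (C2_halfplane_lim (dr psi)) as [a Ha]; [simpl; tauto|].
  rewrite (curl_radial_field psi (dr psi) a), curl_zero; auto.
  - apply C2_halfplane_continuity; simpl; tauto.
  - apply C2_halfplane_continuity; simpl; tauto.
  - apply C2_halfplane_partials.
  - apply C2_halfplane_lim_psi.
Qed.

Lemma C2_halfplane_dtt x t : dtt (radial_field psi) x t = radial_field (dt (dt psi)) x t.
Proof. apply (dtt_radial_field psi (dt psi)); apply C2_halfplane_partials. Qed.

End HalfPlane.

Theorem lemma2p2 (p : R) (s q V : R3 -> R) (st qt Vt : R -> R)
  (psi : R -> R -> R) (sigma : R) :
  1 < p ->
  (sigma = 1 \/ sigma = -1) ->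
  (forall x, 0 < s x) -> (forall x, 0 < q x) -> (forall x, 0 < V x) ->
  C2 B3 s -> C2 B3 q -> C2 B3 V ->
  (forall x, s x = st (norm3 x)) ->
  (forall x, q x = qt (norm3 x)) ->
  (forall x, V x = Vt (norm3 x)) ->
  C2_halfplane psi ->
  (forall t, psi 0 t = 0) ->
  (forall t, filterlim (uncurry (dr (dr psi)))
               (within (fun z : R * R => 0 < fst z) (locally (0, t))) (locally 0)) ->
  C2_VF (radial_field psi) /\
  (solves_pde s q V p sigma (radial_field psi) <-> solves_ode st qt Vt p sigma psi).
Proof.
  intros _ _ _ _ _ _ _ _ Es Eq EV Hpsi Hpsi0 Hrr. split.
  - apply C2_halfplane_radial_field_C2; assumption.
  - apply pde_iff_ode; auto.
    + intros x t. apply C2_halfplane_curl_curl; assumption.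
    + intros x t. apply C2_halfplane_dtt; assumption.
Qed.
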